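(* Let $D$ be a reduced knot diagram, let $2\le k\le\infty$, and let $\boldsymbol\ell$ be a null pattern of the game matrix $M$ of some version of the $k$-color region select game on $D$. Let $s=\sigma_{\boldsymbol\ell}(e)$ for some edge $e$ of $D$. Fix a checkerboard shading of $D$, and let $r_1,r_2$ be two regions that are both shaded or both unshaded. Then there is an integer $i$ with $|2i|\le d(r_1,r_2)$ such that $\boldsymbol\ell(r_1)=\boldsymbol\ell(r_2)+2is$ in $\mathbb{Z}_k$.
   Context: Diagrams: a link (knot) diagram $D$ is the underlying graph of a regular projection of a link (knot) into $S^2$. Its vertices are the crossings, each of valence 4, and over/under information is ignored. Components without crossings are closed loops, each regarded as one edge with no vertices. Regions of $D$ are the connected components of $S^2\setminus D$. A vertex or edge is incident to a region if it lies in the boundary of that region. Two regions are adjacent if they are incident to a common edge. A vertex $v$ is reducible if some circle in $S^2$ meets $D$ transversely only at $v$, and irreducible otherwise. An irreducible vertex is incident to four distinct regions. A reducible vertex $v$ is incident to exactly three regions $r_0,r_1,r_2$, where $r_0$ touches $v$ from two sides and $r_1,r_2$ touch it from one side. A knot diagram with $n$ vertices has $n+2$ regions. A knot diagram is reduced if all its vertices are irreducible. Ring: for an integer $k\ge2$ let $\mathbb{Z}_k=\mathbb{Z}/k\mathbb{Z}$, and for $k=\infty$ let $\mathbb{Z}_\infty=\mathbb{Z}$. Game versions: a version of the $k$-color region select game on $D$ is a choice of an increment number $a(v,r)\in\mathbb{Z}_k$ for every incident vertex–region pair, subject to the following rules. - If $k<\infty$ and $v$ is irreducible, then $a(v,r)=a_v$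 is the same for all regions $r$ incident to $v$, and $a_v$ is not a zero divisor of $\mathbb{Z}_k$. - If $k<\infty$ and $v$ is reducible, then $a(v,r_0)$ is arbitrary, while $a(v,r_1)$ and $a(v,r_2)$ are not zero divisors. - If $k=\infty$, then $a(v,r)=1$, except that $a(v,r_0)\in\mathbb{Z}$ is arbitrary when $v$ is reducible. - The original game is the version in which all increment numbers equal $1$. Game matrix: enumerate the vertices as $v_1,\dots,v_n$ and the regions as $r_1,\dots,r_m$. The game matrix is the $n\times m$ matrix $M$ over $\mathbb{Z}_k$ with $M_{ij}=a(v_i,r_j)$ if $v_i$ is incident to $r_j$, and $M_{ij}=0$ otherwise. Patterns and configurations: a push pattern is a vector $\mathbf p\in\mathbb{Z}_k^m$, and $\mathbf p(r_j)=p_j$ is the number of times $r_j$ is pushed. A region $r$ is not pushed in $\mathbf p$ if $\mathbf p(r)=0$. A color configuration is a vector $\mathbf c\in\mathbb{Z}_k^n$. Applying $\mathbf p$ to $\mathbf c$ yields $\mathbf c+M\mathbf p$. The configuration $\mathbf c$ is solvable if some $\mathbf p$ satisfies $M\mathbf p=-\mathbf c$; such a $\mathbf p$ is a solving pattern for $\mathbf c$. $D$ is always solvable in the version if every $\mathbf c\in\mathbb{Z}_k^n$ is solvable. A null pattern is an element of $Ker_k(M)=\{\mathbf p\in\mathbb{Z}_k^m: M\mathbf p=0\}$. Push number: for a push pattern $\mathbf p$ and an edge $e$ incident to regions $r,r'$, the push number of $e$ is $\sigma_{\mathbf p}(e)=\mathbf p(r)+\mathbf p(r')\in\mathbb{Z}_k$.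 Checkerboard shading: a checkerboard shading of $D$ is a shading of some of its regions such that, of any two adjacent regions, exactly one is shaded. Distance: the dual graph of $D$ has one vertex per region, with an edge between the vertices of each pair of adjacent regions. The distance $d(r_1,r_2)$ is the graph distance between the corresponding vertices of the dual graph. *)

From HB Require Import structures.
From mathcomp Require Import all_boot all_order all_algebra.
Set Implicit Arguments. Unset Strict Implicit. Unset Printing Implicit Defensive.
Import Order.TTheory GRing.Theory Num.Theory.

(* A diagram with crossings [vert] is encoded by its darts (half-edges)
   (v, i), i : 'I_4, listed counterclockwise around the crossing v.
   [alpha] glues half-edges into edges (fixed-point-free involution). *)
Record diagram := Diagram {
  vert : finType;
  alpha : vert * 'I_4 -> vert * 'I_4;
  alpha_invol : involutive alpha;
  alpha_fpf : forall d, alpha d != d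
}.

Definition dart (D : diagram) := (vert D * 'I_4)%type.

Local Open Scope ring_scope.
Section Diag.
Variable D : diagram.
Local Notation Dt := (dart D).

Definition sigma (d : Dt) : Dt := (d.1, ordS d.2).
Definition sigma_inv (d : Dt) : Dt := (d.1, ord_pred d.2).

(* dart (v,i) also names the corner (angle) of v between half-edges i and i+1;
   the face permutation maps a corner to the next corner of the same region *)
Definition phi (d : Dt) : Dt := alpha (sigma d).
(* straight-ahead walk along the curve *)
Definition tau (d : Dt) : Dt := sigma (sigma (alpha d)).

Definition orbitset (f : Dt -> Dt) (d : Dt) : {set Dt} := [set x | fconnect f d x].

Definition face (d : Dt) : {set Dt} := orbitset phi d.
Definition regions : {set {set Dt}} := [set face d | d : Dt].

(* the (unoriented) components of the curve; each is traversed by two tau-orbits *)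
Definition strand_orbits : {set {set Dt}} := [set orbitset tau d | d : Dt].

(* knot diagram on S^2: one component, and Euler characteristic
   V - E + F = 2 with E = 2V (the diagram is connected since it is one curve) *)
Definition knot_diagram : Prop :=
  #|strand_orbits| = 2 /\ #|regions| = (#|vert D| + 2)%N.

Definition incident (v : vert D) (r : {set Dt}) : bool := [exists i : 'I_4, (v, i) \in r].

Definition touches (v : vert D) (r : {set Dt}) : nat := #|[set i : 'I_4 | (v, i) \in r]|.

Definition irreducible (v : vert D) : bool := #|[set face (v, i) | i : 'I_4]| == 4%N.
Definition reduced : Prop := forall v, irreducible v.

(* the edge of half-edge d is incident to face d and face (sigma_inv d) *)
Definition adjacent (r r' : {set Dt}) : bool :=
  [exists d : Dt, (d \in r) && (sigma_inv d \in r')].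

Definition checkerboard (shade : {set Dt} -> bool) : Prop :=
  forall r r', r \in regions -> r' \in regions -> adjacent r r' -> shade r != shade r'.

Fixpoint ball (n : nat) (r : {set Dt}) : {set {set Dt}} :=
  match n with
  | 0 => [set r]
  | n'.+1 => ball n' r :|: [set y in regions | [exists x in ball n' r, adjacent x y]]
  end.
Definition dist (r1 r2 : {set Dt}) : nat :=
  find (fun n => r2 \in ball n r1) (iota 0 #|regions|).

Definition nonzerodiv (R : pzRingType) (x : R) : Prop := forall y, x * y = 0 -> y = 0.

(* a version with k < oo, over R = 'Z_k *)
Definition fin_version (R : pzRingType) (a : vert D -> {set Dt} -> R) : Prop :=
  forall v,
    (irreducible v ->
       exists2 av : R, nonzerodiv av & forall r, r \in regions -> incident v r -> a v r = av)
    /\ (~~ irreducible v ->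
       forall r, r \in regions -> incident v r -> (touches v r < 2)%N -> nonzerodiv (a v r)).

(* a version with k = oo, over int *)
Definition inf_version (a : vert D -> {set Dt} -> int) : Prop :=
  forall v r, r \in regions -> incident v r ->
    (irreducible v || (touches v r < 2)%N) -> a v r = 1.

(* null pattern: M l = 0 for the game matrix M of the version a *)
Definition null_pattern (R : pzRingType) (a : vert D -> {set Dt} -> R)
    (l : {set Dt} -> R) : Prop :=
  forall v, \sum_(r in regions | incident v r) a v r * l r = 0.

Definition push_number (R : pzRingType) (l : {set Dt} -> R) (d : Dt) : R :=
  l (face d) + l (face (sigma_inv d)).

End Diag.

From HB Require Import structures.
From mathcomp Require Import all_boot all_order all_algebra.
From mathcomp Require Import zify ring.
Set Implicit Arguments. Unset Strict Implicit. Unset Printing Implicit Defensive.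
Import Order.TTheory GRing.Theory Num.Theory.
Local Open Scope ring_scope.

(* At an irreducible crossing a null pattern makes the four corner values sum
   to zero, so the two half-edges leaving a crossing in opposite directions
   carry opposite push numbers.  Following the single curve of a knot through
   every half-edge, all edges therefore have push number [s] or [-s].  Crossing
   an edge from region [x] to region [y] gives [l y = +-s - l x]; along a
   shortest dual path of even length [m] from [r1] to [r2] this yields
   [l r2 = l r1 + j s] with [|j| <= m] and [j] even. *)

Lemma ordS4 (i : 'I_4) : ordS (ordS (ordS (ordS i))) = i.
Proof. by apply/val_inj; case: i => [[|[|[|[|//]]]] ?]. Qed.

Lemma ordSS_neq (i : 'I_4) : ordS (ordS i) != i.
Proof. by case: i => [[|[|[|[|//]]]] ?]. Qed.

Lemma sumr_ord4_rot (V : nmodType) (g : 'I_4 -> V) (i : 'I_4) :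
  \sum_j g j = g (ordS (ordS i)) + g (ordS i) + (g i + g (ord_pred i)).
Proof.
rewrite -big_enum (perm_big [:: ordS (ordS i); ordS i; i; ord_pred i]) /=.
  by rewrite !big_cons big_nil addr0 !addrA.
apply: uniq_perm; rewrite ?enum_uniq //.
- by case: i => [[|[|[|[|//]]]] ?].
- by move=> j; rewrite mem_enum !inE; case: i j => [[|[|[|[|//]]]] ?] [[|[|[|[|//]]]] ?].
Qed.

Section Darts.
Variable D : diagram.
Local Notation Dt := (dart D).
Local Notation tau := (@tau D).

Lemma sigmaK : cancel (@sigma D) (@sigma_inv D).
Proof. by case=> v i; rewrite /sigma /sigma_inv /= ordSK. Qed.

Lemma sigma_invK : cancel (@sigma_inv D) (@sigma D).
Proof. by case=> v i; rewrite /sigma /sigma_inv /= ord_predK. Qed.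

Lemma sigma4 (d : Dt) : sigma (sigma (sigma (sigma d))) = d.
Proof. by case: d => v i; rewrite /sigma /= ordS4. Qed.

Lemma sigmaSS_inv (d : Dt) : sigma (sigma d) = sigma_inv (sigma_inv d).
Proof. by rewrite -{1}(sigma4 (sigma_inv (sigma_inv d))) !sigma_invK. Qed.

Lemma alpha_inj : injective (@alpha D).
Proof. exact: inv_inj (@alpha_invol D). Qed.

Lemma phi_inj : injective (@phi D).
Proof. by move=> x y /alpha_inj /(can_inj sigmaK). Qed.

Lemma tau_inj : injective tau.
Proof. by move=> x y /(can_inj sigmaK) /(can_inj sigmaK) /alpha_inj. Qed.

Lemma mem_face (d : Dt) : d \in face d.
Proof. by rewrite inE connect0. Qed.

Lemma face_regions (d : Dt) : face d \in regions D.
Proof. exact: imset_f. Qed.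

Lemma region_face (r : {set Dt}) (d : Dt) : r \in regions D -> d \in r -> r = face d.
Proof.
case/imsetP=> x _ ->; rewrite inE => xd.
apply/setP=> y; rewrite !inE; apply/idP/idP => [xy|]; last exact: connect_trans.
by apply: connect_trans xy; rewrite fconnect_sym //; apply: phi_inj.
Qed.

Lemma face_phi (d : Dt) : face (phi d) = face d.
Proof. by apply/esym/region_face; rewrite ?face_regions // inE fconnect1. Qed.

Lemma face_alpha (d : Dt) : face (alpha d) = face (sigma_inv d).
Proof. by rewrite -(face_phi (sigma_inv d)) /phi sigma_invK. Qed.

Lemma face_sigma_inv_alpha (d : Dt) : face (sigma_inv (alpha d)) = face d.
Proof. by rewrite -face_alpha; congr face; apply: alpha_invol. Qed.

Lemma iter_tau_alpha (n : nat) (d : Dt) : iter n tau (alpha (iter n tau d)) = alpha d.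
Proof.
elim: n d => // n IH d; rewrite iterSr iterS -(IH d); congr (iter n _ _).
by rewrite {1}/tau alpha_invol sigma4.
Qed.

Lemma iter_tau_inj (n : nat) : injective (iter n tau).
Proof. by elim: n => // n IH x y; rewrite !iterS => /tau_inj /IH. Qed.

(* Going [m] steps along the curve from [d] and then [m] steps back from the
   opposite half-edge returns to [alpha d]; this rules out both parities of
   the index of [alpha d] in the orbit of [d]. *)
Lemma alpha_notin_tau_orbit (d : Dt) : ~~ fconnect tau d (alpha d).
Proof.
apply/negP => /iter_findex; rewrite -(odd_double_half (findex _ _ _)) -addnn.
set m := _./2; set y := iter m tau d; have back := iter_tau_alpha m d.
case: odd => /=; rewrite add0n iterD -/y; last first.
  by rewrite -back => /iter_tau_inj yE; move: (alpha_fpf y); rewrite -{1}yE eqxx.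
rewrite -iterS iterSr -back => /iter_tau_inj.
by rewrite /tau; case: (alpha y) => v i /= [] /eqP; rewrite (negbTE (ordSS_neq i)).
Qed.

Lemma mem_orbitset (d : Dt) : d \in orbitset tau d.
Proof. by rewrite inE connect0. Qed.

Lemma fconnect_tau_knot (HK : knot_diagram D) (d d' : Dt) :
  fconnect tau d d' \/ fconnect tau (alpha d) d'.
Proof.
case: HK => /eqP/cards2P [A [B [AB strandsE]]] _.
have orbit_AB x : orbitset tau x \in [set A; B] by rewrite -strandsE imset_f.
have ne : orbitset tau d != orbitset tau (alpha d).
  apply: contraNneq (alpha_notin_tau_orbit d) => E.
  by move: (mem_orbitset (alpha d)); rewrite -E inE.
suff : orbitset tau d' = orbitset tau d \/ orbitset tau d' = orbitset tau (alpha d).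
  by case=> E; [left | right]; move: (mem_orbitset d'); rewrite E inE.
move: (orbit_AB d) (orbit_AB (alpha d)) (orbit_AB d') ne; rewrite !inE.
by do 3!case/orP=> /eqP->; rewrite ?eqxx //; auto.
Qed.

Lemma ballS (n : nat) (r : {set Dt}) :
  ball n.+1 r = ball n r :|: [set y in regions D | [exists x in ball n r, adjacent x y]].
Proof. by []. Qed.

Lemma ball_mono (r : {set Dt}) (m n : nat) : (m <= n)%N -> ball m r \subset ball n r.
Proof.
move/subnKC <-; elim: (n - m)%N => [|k IH]; first by rewrite addn0.
by apply: subset_trans IH _; rewrite addnS ballS subsetUl.
Qed.

Lemma ball_sub_regions (n : nat) (r : {set Dt}) : r \in regions D -> ball n r \subset regions D.
Proof.
move=> rR; elim: n => [|n IH]; first by rewrite sub1set.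
by rewrite ballS subUset IH; apply/subsetP=> y; rewrite inE => /andP[].
Qed.

Lemma ball_stationary (n : nat) (r : {set Dt}) :
  ball n.+1 r = ball n r -> forall m, (n <= m)%N -> ball m r = ball n r.
Proof.
move=> fixn m /subnKC <-; elim: (m - n)%N => [|k IH]; first by rewrite addn0.
by rewrite addnS ballS IH -ballS.
Qed.

Lemma ball_card_growing (n : nat) (r : {set Dt}) :
  (forall m, (m < n)%N -> ball m.+1 r != ball m r) -> (n < #|ball n r|)%N.
Proof.
elim: n => [|n IH] grow; first by rewrite cards1.
apply: leq_ltn_trans (IH (fun m mn => grow m (ltnW mn))) _; apply: proper_card.
by rewrite properEneq eq_sym grow // ballS subsetUl.
Qed.

Lemma ball_stationary_exists (r : {set Dt}) : r \in regions D ->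
  exists2 n, (n < #|regions D|)%N & ball n.+1 r = ball n r.
Proof.
move=> rR; case: (pickP (fun n : 'I_#|regions D| => ball n.+1 r == ball n r)).
  by move=> n /eqP; exists n.
move=> grow; suff : (#|regions D| < #|ball #|regions D| r|)%N.
  by rewrite ltnNge subset_leq_card ?ball_sub_regions.
by apply: ball_card_growing => m mN; apply: negbT (grow (Ordinal mN)).
Qed.

Lemma ball_sub_last (m : nat) (r : {set Dt}) : r \in regions D ->
  ball m r \subset ball #|regions D|.-1 r.
Proof.
move=> rR; have [n nN fixn] := ball_stationary_exists rR.
have nN' : (n <= #|regions D|.-1)%N by rewrite -ltnS prednK // (leq_ltn_trans _ nN).
have [mN|Nm] := leqP m #|regions D|.-1; first exact: ball_mono.
by rewrite (ball_stationary fixn nN') (ball_stationary fixn (leq_trans nN' (ltnW Nm))).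
Qed.

(* Each step along the curve ([alpha], [sigma_inv]) moves to an adjacent face,
   and the curve passes through every half-edge. *)
Lemma knot_regions_in_ball (HK : knot_diagram D) (r r' : {set Dt}) :
  r \in regions D -> r' \in regions D -> exists n, r' \in ball n r.
Proof.
case/imsetP=> d0 _ ->; case/imsetP=> d _ ->.
pose near (x : Dt) := exists n, face x \in ball n (face d0).
have near_sigma_inv x : near x -> near (sigma_inv x).
  case=> n xn; exists n.+1; rewrite ballS; apply/setUP; right; rewrite inE face_regions /=.
  by apply/existsP; exists (face x); rewrite xn; apply/existsP; exists x; rewrite !mem_face.
have near_alpha x : near x -> near (alpha x).
  by move/near_sigma_inv; rewrite /near face_alpha.
have near_tau x : near x -> near (tau x).
  by move/near_alpha/near_sigma_inv/near_sigma_inv; rewrite /tau sigmaSS_inv.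
have near_iter n x : near x -> near (iter n tau x).
  by move=> xn; elim: n => // n IH; rewrite iterS; apply: near_tau.
have near_d0 : near d0 by exists 0%N; rewrite inE.
by case: (fconnect_tau_knot HK d0 d) => /iter_findex <-; apply: near_iter => //; apply: near_alpha.
Qed.

Lemma dist_ball (HK : knot_diagram D) (r r' : {set Dt}) :
  r \in regions D -> r' \in regions D -> r' \in ball (dist r r') r.
Proof.
move=> rR r'R; have [n r'n] := knot_regions_in_ball HK rR r'R.
have N_gt0 : (0 < #|regions D|)%N by apply/card_gt0P; exists r.
have reached : has (fun n => r' \in ball n r) (iota 0 #|regions D|).
  apply/hasP; exists #|regions D|.-1; last exact: subsetP (ball_sub_last n rR) _ r'n.
  by rewrite mem_iota add0n ltn_predL.
have := nth_find 0%N reached; rewrite nth_iota ?add0n //.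
by rewrite -[X in (_ < X)%N](size_iota 0 #|regions D|) -has_find.
Qed.

Section PushNumber.
Variables (R : comNzRingType) (l : {set Dt} -> R).
Hypothesis corner_sum0 : forall v, \sum_(i < 4) l (face (v, i)) = 0.

Lemma push_number_alpha (d : Dt) : push_number l (alpha d) = push_number l d.
Proof. by rewrite /push_number face_alpha face_sigma_inv_alpha addrC. Qed.

Lemma push_number_sigmaSS (d : Dt) : push_number l (sigma (sigma d)) = - push_number l d.
Proof.
apply/eqP; rewrite -addr_eq0; case: d => v i.
by rewrite /push_number /sigma /sigma_inv /= ordSK -(corner_sum0 v) (sumr_ord4_rot _ i).
Qed.

Lemma push_number_tau (d : Dt) : push_number l (tau d) = - push_number l d.
Proof. by rewrite /tau push_number_sigmaSS push_number_alpha. Qed.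

Lemma push_number_iter_tau (n : nat) (d : Dt) :
  push_number l (iter n tau d) = (-1) ^+ n * push_number l d.
Proof.
elim: n => [|n IH]; first by rewrite expr0 mul1r.
by rewrite iterS push_number_tau IH exprS mulN1r mulNr.
Qed.

Lemma push_number_knot (HK : knot_diagram D) (e d : Dt) :
  push_number l d = push_number l e \/ push_number l d = - push_number l e.
Proof.
have pm n : (-1) ^+ n * push_number l e = push_number l e \/
    (-1) ^+ n * push_number l e = - push_number l e.
  by rewrite -signr_odd; case: odd; rewrite ?mul1r ?mulN1r; [right | left].
case: (fconnect_tau_knot HK e d) => /iter_findex <-; rewrite push_number_iter_tau //.
by rewrite push_number_alpha.
Qed.

End PushNumber.

Lemma sum_incident (V : nmodType) (F : {set Dt} -> V) (v : vert D) : irreducible v ->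
  \sum_(r in regions D | incident v r) F r = \sum_(i < 4) F (face (v, i)).
Proof.
move=> irr_v; rewrite -[RHS](big_imset F) /=; last first.
  by apply/imset_injP; rewrite (eqP irr_v) card_ord.
apply: eq_bigl => r; apply/andP/imsetP => [[rR /existsP[i ri]]|[i _ ->]].
  by exists i; rewrite ?inE // (region_face rR ri).
by rewrite face_regions; split=> //; apply/existsP; exists i; rewrite mem_face.
Qed.

Lemma null_pattern_corner_sum (R : comNzRingType) (a : vert D -> {set Dt} -> R)
    (l : {set Dt} -> R) (v : vert D) (c : R) :
  irreducible v -> null_pattern a l ->
  (forall r, r \in regions D -> incident v r -> a v r = c) ->
  c * \sum_(i < 4) l (face (v, i)) = 0.
Proof.
move=> irr_v null_l a_c; rewrite -(sum_incident _ irr_v) mulr_sumr -[RHS](null_l v).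
by apply: eq_bigr => r /andP[rR vr]; rewrite a_c.
Qed.

Section Checkerboard.
Variables (R : comNzRingType) (l : {set Dt} -> R) (s : R).
Hypothesis push_number_pm : forall d : Dt, push_number l d = s \/ push_number l d = - s.
Variables (shade : {set Dt} -> bool) (r0 : {set Dt}).
Hypotheses (checker : checkerboard shade) (r0R : r0 \in regions D).

(* Walking [m] steps away from [r0], each step adds [+s] or [-s] to the sum of
   the values on the two sides of the crossed edge, and flips the shading. *)
Lemma ball_pattern_value (n : nat) (r : {set Dt}) : r \in ball n r0 ->
  exists m p : nat, [/\ (m <= n)%N, (p <= m)%N, shade r = shade r0 (+) odd m
     & l r = (-1) ^+ m * l r0 + s *~ (m%:Z - 2 * p%:Z)].
Proof.
elim: n r => [|n IH] r.
  rewrite inE => /eqP ->; exists 0%N, 0%N; split => //; first by rewrite addbF.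
  by rewrite expr0 mul1r mulr0z addr0.
rewrite ballS => /setUP[/IH [m [p [mn pm shade_r l_r]]]|].
  by exists m, p; split => //; apply: leqW.
rewrite inE => /andP[rR /existsP[x /andP[xn adj_xr]]].
have [m [p [mn pm shade_x l_x]]] := IH x xn.
have xR : x \in regions D := subsetP (ball_sub_regions n r0R) x xn.
have shade_r : shade r = shade r0 (+) odd m.+1.
  move: (checker xR rR adj_xr); rewrite shade_x /=.
  by case: (shade r); case: (shade r0); case: (odd m).
have [d /andP[xd rd]] := existsP adj_xr.
have l_r : l r = push_number l d - l x.
  by rewrite /push_number -(region_face xR xd) -(region_face rR rd) addrC addKr.
case: (push_number_pm d) => pn_d.
- exists m.+1, (m - p)%N; split; rewrite ?(leq_trans (leq_subr _ _)) //.
  have -> : m.+1%:Z - 2 * (m - p)%N%:Z = 1 - (m%:Z - 2 * p%:Z) by lia.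
  by rewrite l_r pn_d l_x exprS mulN1r; ring.
- exists m.+1, (m.+1 - p)%N; split; rewrite ?leq_subr //.
  have -> : m.+1%:Z - 2 * (m.+1 - p)%N%:Z = - 1 - (m%:Z - 2 * p%:Z) by lia.
  by rewrite l_r pn_d l_x exprS mulN1r; ring.
Qed.

End Checkerboard.

Lemma checkerboard_pattern_diff (HK : knot_diagram D) (R : comNzRingType)
    (l : {set Dt} -> R) :
  (forall v, \sum_(i < 4) l (face (v, i)) = 0) ->
  forall (e : Dt) (shade : {set Dt} -> bool), checkerboard shade ->
  forall r1 r2, r1 \in regions D -> r2 \in regions D -> shade r1 = shade r2 ->
  exists i : int, `|2 * i| <= (dist r1 r2)%:Z /\ l r1 = l r2 + push_number l e *~ (2 * i).
Proof.
move=> corner_sum0 e shade checker r1 r2 r1R r2R shade12.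
have pm := push_number_knot corner_sum0 HK e.
have [m [p [m_dist pm_m shade_r2 l_r2]]] :=
  ball_pattern_value pm checker r1R (dist_ball HK r1R r2R).
have m_even : odd m = false by move: shade_r2; rewrite shade12; case: odd; case: (shade r2).
have m_half : m = (m./2 + m./2)%N by rewrite addnn -[m in LHS]odd_double_half m_even.
exists (p%:Z - (m./2)%:Z); split; first by rewrite ler_norml; apply/andP; split; lia.
rewrite l_r2 -signr_odd m_even expr0 mul1r.
have -> : 2 * (p%:Z - (m./2)%:Z) = - (m%:Z - 2 * p%:Z) by lia.
by rewrite mulrNz addrK.
Qed.

End Darts.

Theorem mainTheorem12 (D : diagram) (HK : knot_diagram D) (Hred : reduced D) :
  (forall (k : nat), (1 < k)%N ->
    forall (a : vert D -> {set dart D} -> 'Z_k), fin_version a ->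
    forall (l : {set dart D} -> 'Z_k), null_pattern a l ->
    forall (e : dart D) (shade : {set dart D} -> bool), checkerboard shade ->
    forall r1 r2, r1 \in regions D -> r2 \in regions D -> shade r1 = shade r2 ->
    exists i : int, `|2 * i| <= (dist r1 r2)%:Z /\
      l r1 = l r2 + push_number l e *~ (2 * i))
  /\
  (forall (a : vert D -> {set dart D} -> int), inf_version a ->
    forall (l : {set dart D} -> int), null_pattern a l ->
    forall (e : dart D) (shade : {set dart D} -> bool), checkerboard shade ->
    forall r1 r2, r1 \in regions D -> r2 \in regions D -> shade r1 = shade r2 ->
    exists i : int, `|2 * i| <= (dist r1 r2)%:Z /\
      l r1 = l r2 + push_number l e *~ (2 * i)).
Proof.
split.
- move=> k _ a a_fin l null_l; apply: (@checkerboard_pattern_diff D HK _ l) => v.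
  have [c c_nzd a_c] := (a_fin v).1 (Hred v).
  exact: c_nzd (null_pattern_corner_sum (Hred v) null_l a_c).
- move=> a a_inf l null_l; apply: (@checkerboard_pattern_diff D HK _ l) => v.
  rewrite -[LHS]mul1r; apply: null_pattern_corner_sum (Hred v) null_l _ => r rR vr.
  by rewrite a_inf ?Hred.
Qed.
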